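(* Let $n\ge2$, $Q>0$ real, and let $P\in\mathrm{Mat}(n^2,\mathbb{C})$ be a nontrivial solution of rank $r$ to $$P^*=P,\quad P^2=P,\quad Q^2(P_1P_2P_1-P_2P_1P_2)=P_1-P_2,$$ where $P_1=P\otimes I_n$, $P_2=I_n\otimes P$. Let $k=\tfrac12\operatorname{rank}(P_1-P_2)$. (a) $\operatorname{rank}(Q^2P_1P_2P_1-P_1)=\operatorname{rank}(Q^2P_2P_1P_2-P_2)=rn-k$. (b) $P$ satisfies $Q^2P_1P_2P_1=P_1$ and $Q^2P_2P_1P_2=P_2$ (i.e. $P$ is of Temperley–Lieb type) if and only if $k=rn$.
   Context: $I_n$ is the $n\times n$ identity matrix and $\otimes$ is the Kronecker product. A solution is trivial if $P=0$ or $P=I_n\otimes I_n$, nontrivial otherwise. *)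

(* complex numbers as R[i] (real_closed's complex) over a realType R
   (Stdlib's R is a realType, so R[i] is then the usual field C);
   Kronecker product = real_closed's tensmx (A *t B). *)
From HB Require Import structures.
From mathcomp Require Import all_boot all_order all_algebra.
From mathcomp Require Export reals.
From mathcomp Require Export complex mxtens.
Set Implicit Arguments. Unset Strict Implicit. Unset Printing Implicit Defensive.
Import Order.TTheory GRing.Theory Num.Theory.
Local Open Scope ring_scope.

Definition adjmx (R : rcfType) (m : nat) (A : 'M[R[i]]_m) : 'M[R[i]]_m :=
  (map_mx (@Num.conj R[i]) A)^T.

Definition P1 (R : rcfType) (n : nat) (P : 'M[R[i]]_(n * n)) : 'M[R[i]]_(n * n * n) :=
  P *t (1%:M : 'M[R[i]]_n).

(* P_2 = I_n (x) P, for P in Mat(n^2); tensmx gives a matrix of size n*(n*n),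
   which we reindex (castmx along n*(n*n) = n*n*n, a pure reinterpretation of the
   same lexicographic index (a,b,c)) so that it can be multiplied with P_1 *)
Definition P2 (R : rcfType) (n : nat) (P : 'M[R[i]]_(n * n)) : 'M[R[i]]_(n * n * n) :=
  castmx (mulnA n n n, mulnA n n n) ((1%:M : 'M[R[i]]_n) *t P).

(* E := P_1 and F := P_2 are orthogonal projections of rank rn.  The relation
   q (EFE - FEF) = E - F, q = Q^2, says exactly that the defect A := q EFE - E
   equals q FEF - F, so the row space of A lies in im E /\ im F, on which A acts
   as the scalar q - 1.  If q = 1, A is a Hermitian matrix with A^2 = 0, hence
   A = 0, which forces E = F and then P = 0 or P = 1.  Otherwise
   rank A = dim (im E /\ im F).  For orthogonal projections
   ker (E - F) = (im E /\ im F) (+) (ker E /\ ker F), which gives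
   rank (E - F) + 2 dim (im E /\ im F) = rank E + rank F = 2rn, i.e.
   rank A = rn - k; and A = 0 iff k = rn. *)

From HB Require Import structures.
From mathcomp Require Import all_boot all_order all_algebra.
From mathcomp Require Import reals complex mxtens.
From mathcomp Require Import zify lra.
Set Implicit Arguments. Unset Strict Implicit. Unset Printing Implicit Defensive.
Import Order.TTheory GRing.Theory Num.Theory.
Local Open Scope ring_scope.

Section Idempotents.
Variables (K : fieldType) (N : nat).

Lemma mulmx_idem_sub m (E : 'M[K]_N) (X : 'M[K]_(m, N)) :
  E *m E = E -> (X <= E)%MS -> X *m E = X.
Proof. by move=> EE /submxP[D ->]; rewrite -mulmxA EE. Qed.

Lemma mxrank_idem_trace (E : 'M[K]_N) : E *m E = E -> (\rank E)%:R = \tr E.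
Proof.
(* rank factorisation E = C B; idempotence gives B C = 1, so tr E = tr (B C) *)
move=> EE; have [L LC] := row_fullP (col_base_full E).
have [M BM] := row_freeP (row_base_free E).
have := mulmx_base E; move: (col_base E) (row_base E) L M LC BM => C B L M LC BM CB.
have CBCB : C *m B *m C *m B = C *m B by rewrite -mulmxA CB EE.
have BC : B *m C = 1%:M.
  have := congr1 (fun Z => L *m Z *m M) CBCB => /=.
  by rewrite !mulmxA LC !mul1mx -!mulmxA BM !mulmx1.
by rewrite -[in RHS]CB mxtrace_mulC BC mxtrace1.
Qed.

Variables (E F : 'M[K]_N).
Hypotheses (EE : E *m E = E) (FF : F *m F = F).

Lemma capmx_mulmx_idl : (E :&: F)%MS *m E = (E :&: F)%MS.
Proof. exact: mulmx_idem_sub EE (capmxSl _ _). Qed.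

Lemma capmx_mulmx_idr : (E :&: F)%MS *m F = (E :&: F)%MS.
Proof. exact: mulmx_idem_sub FF (capmxSr _ _). Qed.

Lemma kermx_subr_eq : (kermx (E - F) == E :&: F + kermx (row_mx E F))%MS.
Proof.
set Y := kermx (row_mx E F); set Z := kermx (E - F).
have /eqP := mulmx_ker (row_mx E F).
rewrite mul_mx_row row_mx_eq0 -/Y => /andP[/eqP YE /eqP YF].
have /eqP := mulmx_ker (E - F); rewrite -/Z mulmxBr subr_eq0 => /eqP KE_KF.
apply/andP; split; last first.
  by rewrite addsmx_sub; apply/andP; split; apply/sub_kermxP;
    rewrite mulmxBr ?capmx_mulmx_idl ?capmx_mulmx_idr ?YE ?YF subrr.
rewrite -[Z](subrK (Z *m E)) addrC addmx_sub_adds //.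
  by rewrite sub_capmx submxMl KE_KF submxMl.
have ZE : (Z - Z *m E) *m E = 0 by rewrite mulmxBl -[Z *m E *m E]mulmxA EE subrr.
have ZF : (Z - Z *m E) *m F = 0.
  by rewrite mulmxBl KE_KF -[Z *m F *m F]mulmxA FF subrr.
by apply/sub_kermxP; rewrite mul_mx_row ZE ZF row_mx0.
Qed.

Lemma mxrank_kermx_subr :
  \rank (kermx (E - F)) = (\rank (E :&: F) + \rank (kermx (row_mx E F)))%N.
Proof.
rewrite (eqmx_rank kermx_subr_eq) -[RHS](mxrank_sum_cap (E :&: F)%MS).
suff -> : (E :&: F :&: kermx (row_mx E F))%MS = 0 by rewrite mxrank0 addn0.
set W := (_ :&: _)%MS.
have WE : W *m E = W.
  by apply: mulmx_idem_sub; rewrite // !(submx_trans (capmxSl _ _)) ?capmxSl.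
have /eqP := mulmx_ker (row_mx E F); rewrite mul_mx_row row_mx_eq0 => /andP[/eqP YE _].
have /submxP[D WD] : (W <= kermx (row_mx E F))%MS by exact: capmxSr.
by rewrite -WE WD -mulmxA YE mulmx0.
Qed.

Section TemperleyLieb.
Variable q : K.
Local Notation defect := (q *: (E *m F *m E) - E).

Lemma capmx_mul_defect : (E :&: F)%MS *m defect = q *: (E :&: F)%MS - (E :&: F)%MS.
Proof.
by rewrite mulmxBr -scalemxAr !mulmxA capmx_mulmx_idl capmx_mulmx_idr capmx_mulmx_idl.
Qed.

Hypothesis TL : q *: (E *m F *m E - F *m E *m F) = E - F.

Lemma defect_sym : defect = q *: (F *m E *m F) - F.
Proof.
have -> : q *: (E *m F *m E) = E - F + q *: (F *m E *m F).
  by rewrite -TL scalerBr subrK.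
by rewrite addrAC [E - F - E]addrAC subrr add0r addrC.
Qed.

Lemma defect_sub_capmx : (defect <= E :&: F)%MS.
Proof.
have defectE : defect = (q *: (E *m F) - 1%:M) *m E.
  by rewrite mulmxBl mul1mx -scalemxAl.
have defectF : defect = (q *: (F *m E) - 1%:M) *m F.
  by rewrite defect_sym mulmxBl mul1mx -scalemxAl.
by rewrite sub_capmx {1}defectE submxMl defectF submxMl.
Qed.

Lemma mxrank_defect : q != 1 -> \rank defect = \rank (E :&: F)%MS.
Proof.
move=> q_neq1; apply/eqP; rewrite eqn_leq mxrankS ?defect_sub_capmx //=.
apply: mxrankS; rewrite -[X in (X <= _)%MS](scale1r (E :&: F)%MS).
rewrite -(mulVf (_ : q - 1 != 0)) ?subr_eq0 // -scalerA.
rewrite scalerBl scale1r -capmx_mul_defect.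
by rewrite scalemxAl submxMl.
Qed.

End TemperleyLieb.

Hypothesis TL1 : E *m F *m E - F *m E *m F = E - F.

Lemma TL1_defect_sym : E *m F *m E - E = F *m E *m F - F.
Proof.
have TL : 1 *: (E *m F *m E - F *m E *m F) = E - F by rewrite scale1r.
by have := defect_sym TL; rewrite !scale1r.
Qed.

Lemma TL1_defect_sqr : (E *m F *m E - E) *m (E *m F *m E - E) = 0.
Proof.
have TL : 1 *: (E *m F *m E - F *m E *m F) = E - F by rewrite scale1r.
have := defect_sub_capmx TL; rewrite scale1r => /submxP[D {1}->].
by rewrite -[D *m _ *m _]mulmxA mulmxBr !mulmxA capmx_mulmx_idl capmx_mulmx_idr
  capmx_mulmx_idl subrr mulmx0.
Qed.

End Idempotents.

Section Adjoint.
Variable R : rcfType.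
Local Notation C := R[i].

Lemma adjmxM N (A B : 'M[C]_N) : adjmx (A *m B) = adjmx B *m adjmx A.
Proof. by rewrite /adjmx map_mxM trmx_mul. Qed.

Lemma adjmxB N (A B : 'M[C]_N) : adjmx (A - B) = adjmx A - adjmx B.
Proof. by rewrite /adjmx map_mxB linearB. Qed.

Lemma adjmx1 N : adjmx (1%:M : 'M[C]_N) = 1%:M.
Proof. by rewrite /adjmx map_scalar_mx rmorph1 tr_scalar_mx. Qed.

Lemma adjmx_tens m p (A : 'M[C]_m) (B : 'M[C]_p) : adjmx (A *t B) = adjmx A *t adjmx B.
Proof. by rewrite /adjmx map_mxT trmx_tens. Qed.

Lemma adjmx_castmx m m' (e : m = m') (A : 'M[C]_m) :
  adjmx (castmx (e, e) A) = castmx (e, e) (adjmx A).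
Proof. by case: m' / e; rewrite !castmx_id. Qed.

Lemma mulmx_adjmx_eq0 N (A : 'M[C]_N) : A *m adjmx A = 0 -> A = 0.
Proof.
move=> AA0; apply/matrixP=> i j; rewrite [RHS]mxE.
have /eqP : (A *m adjmx A) i i = 0 by rewrite AA0 mxE.
rewrite !mxE; under eq_bigr do rewrite !mxE -normCK.
rewrite psumr_eq0 => [/allP/(_ j (mem_index_enum j))|k _]; last exact: exprn_ge0.
by rewrite /= sqrf_eq0 normr_eq0 => /eqP.
Qed.

Lemma mxrank_row_mx_adj N (A B : 'M[C]_N) :
  \rank (row_mx A B) = \rank (adjmx A + adjmx B)%MS.
Proof.
rewrite -mxrank_tr tr_row_mx -(mxrank_map Num.conj) map_col_mx -!map_trmx.
exact: esym (addsmxE _ _).1.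
Qed.

Lemma proj_mulmx_sandwich N (E F : 'M[C]_N) :
  E *m E = E -> F *m F = F -> adjmx E = E -> adjmx F = F ->
  E *m F *m E = E -> E *m F = E.
Proof.
move=> EE FF adjE adjF EFE; set G := E - E *m F.
have adjG : adjmx G = E - F *m E by rewrite adjmxB adjmxM adjE adjF.
suff /mulmx_adjmx_eq0/eqP : G *m adjmx G = 0 by rewrite subr_eq0 eq_sym => /eqP.
rewrite adjG /G mulmxBl !mulmxBr !mulmxA EE EFE -[E *m F *m F]mulmxA FF EFE.
by rewrite !subrr.
Qed.

Section OrthogonalProjections.
Variables (N : nat) (E F : 'M[C]_N).
Hypotheses (EE : E *m E = E) (FF : F *m F = F).
Hypotheses (adjE : adjmx E = E) (adjF : adjmx F = F).

Lemma mxrank_subr_proj :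
  (\rank (E - F)%R + 2 * \rank (E :&: F)%MS = \rank E + \rank F)%N.
Proof.
have := mxrank_kermx_subr EE FF; rewrite !mxrank_ker mxrank_row_mx_adj adjE adjF.
have := mxrank_sum_cap E F; have := rank_leq_row (E - F).
have := rank_leq_row (row_mx E F); rewrite mxrank_row_mx_adj adjE adjF.
by set a := \rank (E - F)%R; lia.
Qed.

Lemma TL1_proj_eq : E *m F *m E - F *m E *m F = E - F -> E = F.
Proof.
move=> TL1; have adjD : adjmx (E *m F *m E - E) = E *m F *m E - E.
  by rewrite adjmxB !adjmxM adjE adjF mulmxA.
have D0 : E *m F *m E - E = 0.
  by apply: mulmx_adjmx_eq0; rewrite adjD; exact: TL1_defect_sqr.
have EFE : E *m F *m E = E by apply/eqP; rewrite -subr_eq0 D0.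
have FEF : F *m E *m F = F.
  by apply/eqP; rewrite -subr_eq0 -(TL1_defect_sym TL1) D0.
have EF := proj_mulmx_sandwich EE FF adjE adjF EFE.
have FE := proj_mulmx_sandwich FF EE adjF adjE FEF.
by rewrite -[LHS]adjE -EF adjmxM adjE adjF FE.
Qed.

End OrthogonalProjections.
End Adjoint.

Lemma mxtrace_tens (K : comPzRingType) m p (A : 'M[K]_m) (B : 'M[K]_p) :
  \tr (A *t B) = \tr A * \tr B.
Proof. by rewrite /mxtrace mulr_sum; apply: eq_bigr => i _; rewrite mxE. Qed.

Lemma mxrank_tens_idem (K : numFieldType) m p (A : 'M[K]_m) (B : 'M[K]_p) :
  A *m A = A -> B *m B = B -> \rank (A *t B) = (\rank A * \rank B)%N.
Proof.
move=> AA BB; apply/eqP; rewrite -(eqr_nat K) natrM !mxrank_idem_trace //.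
  by rewrite mxtrace_tens.
by rewrite tensmx_mul AA BB.
Qed.

Lemma tensmx11 (K : comPzRingType) m p :
  (1%:M : 'M[K]_m) *t (1%:M : 'M[K]_p) = 1%:M.
Proof.
apply/matrixP => i j; case: (mxtens_indexP i) => a b; case: (mxtens_indexP j) => a' b'.
by rewrite tensmxE !mxE (inj_eq (can_inj (@mxtens_indexK m p))) xpair_eqE -natrM mulnb.
Qed.

Lemma castmx_mulmx (K : pzRingType) m m' (e : m = m') (A B : 'M[K]_m) :
  castmx (e, e) A *m castmx (e, e) B = castmx (e, e) (A *m B).
Proof. by case: m' / e; rewrite !castmx_id. Qed.

Lemma mxrank_castmx (K : fieldType) m m' (e : m = m') (A : 'M[K]_m) :
  \rank (castmx (e, e) A) = \rank A.
Proof. by case: m' / e; rewrite castmx_id. Qed.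

Section TensorEmbeddings.
Variables (R : rcfType) (n : nat) (P : 'M[R[i]]_(n * n)).

Lemma P1_eq_P2E : P1 P = P2 P -> forall a b c a' b' c',
  P (mxtens_index (a, b)) (mxtens_index (a', b')) * (c == c')%:R =
  (a == a')%:R * P (mxtens_index (b, c)) (mxtens_index (b', c')).
Proof.
move=> P12 a b c a' b' c'.
have reassoc (x y z : 'I_n) : cast_ord (esym (mulnA n n n))
    (mxtens_index (mxtens_index (x, y), z)) = mxtens_index (x, mxtens_index (y, z)).
  by apply: val_inj => /=; rewrite mulnDl -mulnA addnA.
have := congr1 (fun M : 'M_(n * n * n) => M (mxtens_index (mxtens_index (a, b), c))
      (mxtens_index (mxtens_index (a', b'), c'))) P12.
by rewrite /P1 /P2 /= castmxE !reassoc !tensmxE !mxE.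
Qed.

Lemma P1_eq_P2_scalar : (0 < n)%N -> P1 P = P2 P -> exists a, P = a%:M.
Proof.
move=> n_gt0 P12; pose o := Ordinal n_gt0.
have diag a b c : P (mxtens_index (a, b)) (mxtens_index (a, b)) =
                  P (mxtens_index (b, c)) (mxtens_index (b, c)).
  by have := P1_eq_P2E P12 a b c a b c; rewrite !eqxx mulr1 mul1r.
exists (P (mxtens_index (o, o)) (mxtens_index (o, o))).
apply/matrixP => i j; rewrite !mxE.
case: (mxtens_indexP i) => a b; case: (mxtens_indexP j) => a' b'.
rewrite (inj_eq (can_inj (@mxtens_indexK n n))) xpair_eqE.
have [<-|neq_a] /= := eqVneq a a'; last first.
  by have := P1_eq_P2E P12 a b a a' b' a; rewrite eqxx (negbTE neq_a) mulr1 mul0r.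
have [<-|neq_b] := eqVneq b b'; last first.
  by have := P1_eq_P2E P12 a a b a a b'; rewrite eqxx (negbTE neq_b) mulr0 mul1r => <-.
(* (a,b) ~ (b,b) ~ (o,b) ~ (o,o) along [diag] *)
by rewrite mulr1n (diag a b b) -(diag o b b) -(diag o o b).
Qed.

Hypothesis PP : P *m P = P.

Lemma P1_eq_P2_trivial : (0 < n)%N -> P1 P = P2 P ->
  P = 0 \/ P = (1%:M : 'M[R[i]]_n) *t (1%:M : 'M[R[i]]_n).
Proof.
move=> n_gt0 /(P1_eq_P2_scalar n_gt0)[a Pa].
pose o := Ordinal n_gt0.
have aa : a * a = a.
  have := congr1 (fun M : 'M_(n * n) => M (mxtens_index (o, o)) (mxtens_index (o, o))) PP.
  by rewrite /= Pa -scalar_mxM !mxE eqxx !mulr1n.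
have /eqP : a * (a - 1) = 0 by rewrite mulrBr mulr1 aa subrr.
rewrite mulf_eq0 subr_eq0 => /orP[] /eqP a_val; rewrite Pa a_val.
  by left; rewrite raddf0.
by right; rewrite tensmx11.
Qed.

Lemma P1_idem : P1 P *m P1 P = P1 P.
Proof. by rewrite /P1 tensmx_mul PP mulmx1. Qed.

Lemma P2_idem : P2 P *m P2 P = P2 P.
Proof. by rewrite /P2 castmx_mulmx tensmx_mul mulmx1 PP. Qed.

Lemma mxrank_P1 : \rank (P1 P) = (\rank P * n)%N.
Proof. by rewrite mxrank_tens_idem ?mul1mx // mxrank1. Qed.

Lemma mxrank_P2 : \rank (P2 P) = (\rank P * n)%N.
Proof. by rewrite mxrank_castmx mxrank_tens_idem ?mul1mx // mxrank1 mulnC. Qed.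

Hypothesis adjP : adjmx P = P.

Lemma P1_adj : adjmx (P1 P) = P1 P.
Proof. by rewrite /P1 adjmx_tens adjP adjmx1. Qed.

Lemma P2_adj : adjmx (P2 P) = P2 P.
Proof. by rewrite /P2 adjmx_castmx adjmx_tens adjP adjmx1. Qed.

End TensorEmbeddings.

Theorem proposition4 (R : realType) (n : nat) (Q : R) (P : 'M[R[i]]_(n * n)) :
  (2 <= n)%N -> 0 < Q ->
  adjmx P = P -> P *m P = P ->
  (Q ^+ 2)%:C%C *: (P1 P *m P2 P *m P1 P - P2 P *m P1 P *m P2 P) = P1 P - P2 P ->
  P != 0 -> P != (1%:M : 'M[R[i]]_n) *t (1%:M : 'M[R[i]]_n) ->
  let r := \rank P in
  let k : R := (\rank (P1 P - P2 P))%:R / 2 in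
  (* (a) *)
  ((\rank ((Q ^+ 2)%:C%C *: (P1 P *m P2 P *m P1 P) - P1 P))%:R = (r * n)%:R - k /\
   (\rank ((Q ^+ 2)%:C%C *: (P2 P *m P1 P *m P2 P) - P2 P))%:R = (r * n)%:R - k) /\
  (* (b) *)
  (((Q ^+ 2)%:C%C *: (P1 P *m P2 P *m P1 P) = P1 P /\
    (Q ^+ 2)%:C%C *: (P2 P *m P1 P *m P2 P) = P2 P) <-> k = (r * n)%:R).
Proof.
move=> n_ge2 _ adjP PP TL P_neq0 P_neq1 r k.
have EE := P1_idem PP; have FF := P2_idem PP.
have adjE := P1_adj adjP; have adjF := P2_adj adjP.
have q_neq1 : (Q ^+ 2)%:C%C != 1.
  apply/eqP => q1; move: TL; rewrite q1 scale1r => /(TL1_proj_eq EE FF adjE adjF).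
  by case/(P1_eq_P2_trivial PP (ltnW n_ge2)); [move/eqP: P_neq0 | move/eqP: P_neq1].
have rk_sub := mxrank_subr_proj EE FF adjE adjF.
rewrite (mxrank_P1 PP) (mxrank_P2 PP) -/r in rk_sub.
have rk_defect : (\rank ((Q ^+ 2)%:C%C *: (P1 P *m P2 P *m P1 P) - P1 P))%:R
                 = (r * n)%:R - k :> R.
  rewrite (mxrank_defect EE FF TL q_neq1) /k.
  by move/(congr1 (GRing.natmul (1 : R))): rk_sub; rewrite !natrD natrM; lra.
split; first by split; rewrite -?(defect_sym TL).
split=> [[defect0 _] | k_rn].
  by move: rk_defect; rewrite defect0 subrr mxrank0; lra.
have /eqP : (\rank ((Q ^+ 2)%:C%C *: (P1 P *m P2 P *m P1 P) - P1 P))%:R = 0 :> R.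
  by rewrite rk_defect k_rn subrr.
rewrite pnatr_eq0 mxrank_eq0 => /eqP defect0.
by split; apply/eqP; rewrite -subr_eq0 ?defect0 // -(defect_sym TL) defect0.
Qed.
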